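(* Let $l\ge 1$ and let $\alpha,\beta,a,b,\gamma_1,\dots,\gamma_l,c_1,\dots,c_l$ be constants. Let $W=I+\sum_{k\ge1}w_k\lambda^{-k}$, where the $w_k$ are $2\times2$ matrix-valued functions of the variables $t_1,t_2,\dots$ and $a_1,\dots,a_l$ that do not depend on $x$. Let $U=W\sigma_3W^{-1}=\sigma_3+\sum_{k\ge1}u_k\lambda^{-k}$, and define $$B_n=\sigma_3\lambda^n+\sum_{k=0}^{n-1}u_{n-k}\lambda^k\ (n\ge1),\qquad R_n=\gamma_nI+c_n\Big(\sigma_3+\sum_{j\ge1}a_n^{-j}u_j\Big),\qquad C_n=-\frac{R_n}{\lambda-a_n},\qquad S_n=-\frac{\gamma_nI+c_n\sigma_3}{\lambda-a_n}$$ for $n=1,\dots,l$. Suppose $W$ satisfies the Sato equations $$\partial_{t_n}W=B_nW-W\sigma_3\lambda^n\ (n\ge1),\qquad \partial_{a_n}W=C_nW-WS_n\ (n=1,\dots,l).$$ Let $\Psi(\lambda)=W\Psi_0(\lambda)$ with $$\Psi_0(\lambda)=\lambda^{\alpha}(\lambda-1)^{\beta}\prod_{n=1}^l(\lambda-a_n)^{\gamma_n}e^{x\lambda}\,\mathrm{diag}\Big(\lambda^{a}(\lambda-1)^{b}\prod_{n=1}^l(\lambda-a_n)^{c_n}e^{\sum_{n\ge1}t_n\lambda^n},\ \lambda^{-a}(\lambda-1)^{-b}\prod_{n=1}^l(\lambda-a_n)^{-c_n}e^{-\sum_{n\ge1}t_n\lambda^n}\Big).$$ Then $\partial_x\Psi=\lambda\Psi$,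 $\partial_{t_n}\Psi=B_n\Psi$ for all $n\ge1$, and $\partial_{a_n}\Psi=C_n\Psi$ for $n=1,\dots,l$.
   Context: $\sigma_3=\mathrm{diag}(1,-1)$, $I$ is the $2\times 2$ identity. $W^{-1}=\sum_{k\ge0}v_k\lambda^{-k}$ denotes the inverse series, so $u_k=\sum_{j=1}^k[w_j,\sigma_3]v_{k-j}$. $\lambda$ is a spectral parameter independent of all the variables $x,t_n,a_n$. *)

From Stdlib Require Import Reals.
From Coquelicot Require Import Coquelicot.
From mathcomp Require Import all_boot all_algebra.
From mathcomp Require Import Rstruct.

Set Implicit Arguments.
Unset Strict Implicit.
Unset Printing Implicit Defensive.
Import GRing.Theory.
Local Open Scope ring_scope.

Definition M2 := 'M[R]_2.

Definition diag2 (d1 d2 : R) : M2 :=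
  \matrix_(i < 2, j < 2) (if i == j then (if (i : nat) == 0%N then d1 else d2) else 0).
Definition sigma3 : M2 := diag2 1 (-1).

Definition mxSeries (f : nat -> M2) : M2 := \matrix_(i < 2, j < 2) Series (fun m => f m i j).

(* Coefficients of the inverse series W^{-1} = sum_k v_k lam^{-k}, where
   W = I + sum_{k>=1} w_k lam^{-k} (w 0 is ignored; w_0 = I).
   vrev w k = [:: v_k; v_{k-1}; ...; v_0]. *)
Fixpoint vrev (w : nat -> M2) (k : nat) : seq M2 :=
  match k with
  | 0 => [:: 1]
  | k'.+1 => let s := vrev w k' in
             (- \sum_(1 <= j < k'.+2) w j * nth 0 s j.-1) :: s
  end.
Definition vcoef (w : nat -> M2) (k : nat) : M2 := head 0 (vrev w k).

(* u_k = sum_{j=1}^k [w_j, sigma3] v_{k-j}  (U = W sigma3 W^{-1} = sigma3 + sum u_k lam^{-k}) *)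
Definition ucoef (w : nat -> M2) (k : nat) : M2 :=
  \sum_(1 <= j < k.+1) (w j * sigma3 - sigma3 * w j) * vcoef w (k - j).

Definition Wser (w : nat -> M2) (lam : R) : M2 :=
  1 + mxSeries (fun m => (lam ^-1) ^+ m.+1 *: w m.+1).

Definition Bn (n : nat) (w : nat -> M2) (lam : R) : M2 :=
  lam ^+ n *: sigma3 + \sum_(0 <= k < n) lam ^+ k *: ucoef w (n - k).

Definition Rn (gn cn an : R) (w : nat -> M2) : M2 :=
  gn%:M + cn *: (sigma3 + mxSeries (fun m => (an ^-1) ^+ m.+1 *: ucoef w m.+1)).

Definition Cn (gn cn an : R) (w : nat -> M2) (lam : R) : M2 :=
  - ((lam - an) ^-1 *: Rn gn cn an w).
Definition Sn (gn cn an lam : R) : M2 :=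
  - ((lam - an) ^-1 *: (gn%:M + cn *: sigma3)).

Definition wAt (l : nat) (w : nat -> (nat -> R) -> ('I_l -> R) -> M2)
  (t : nat -> R) (a : 'I_l -> R) : nat -> M2 := fun k => w k t a.

Definition updt (t : nat -> R) (n : nat) (s : R) : nat -> R :=
  fun m => if m == n then s else t m.
Definition upda (l : nat) (a : 'I_l -> R) (n : 'I_l) (s : R) : 'I_l -> R :=
  fun m => if m == n then s else a m.

Definition mx_derive (F : R -> M2) (s : R) (M : M2) : Prop :=
  forall i j : 'I_2, is_derive (fun y => F y i j) s (M i j).

Definition dom (l : nat) (a : 'I_l -> R) (lam : R) : Prop :=
  Rlt 1 lam /\ forall n : 'I_l, Rlt (a n) lam /\ a n <> 0%R.

Definition Psi0 (l : nat) (alpha beta aa bb : R) (gamma c : 'I_l -> R)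
  (x : R) (t : nat -> R) (a : 'I_l -> R) (lam : R) : M2 :=
  let xi := Series (fun k => t k.+1 * lam ^+ k.+1) in
  (Rpower lam alpha * Rpower (lam - 1) beta
     * \prod_(n < l) Rpower (lam - a n) (gamma n) * exp (x * lam))
  *: diag2 (Rpower lam aa * Rpower (lam - 1) bb
              * \prod_(n < l) Rpower (lam - a n) (c n) * exp xi)
           (Rpower lam (- aa) * Rpower (lam - 1) (- bb)
              * \prod_(n < l) Rpower (lam - a n) (- c n) * exp (- xi)).

Definition Psi (l : nat) (alpha beta aa bb : R) (gamma c : 'I_l -> R)
  (w : nat -> (nat -> R) -> ('I_l -> R) -> M2)
  (x : R) (t : nat -> R) (a : 'I_l -> R) (lam : R) : M2 :=
  Wser (wAt w t a) lam * Psi0 alpha beta aa bb gamma c x t a lam.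

(** [Psi0] is a scalar function times a diagonal matrix whose entries are products of
    powers and exponentials; since [xi = sum_k t_k lam^k] is affine in each [t_n], its
    logarithmic derivatives in [x], [t_n] and [a_n] are the constant matrices [K = lam],
    [lam^n sigma3] and [S_n].  For such [K], the Sato equation [dW = B W - W K] and the
    product rule give [d(W Psi0) = (B W - W K) Psi0 + W K Psi0 = B (W Psi0)].  In [x],
    [W] is constant and [K = lam] is central, so [dW = 0 = lam W - W lam] has the same
    form. *)

From Stdlib Require Import Reals FunctionalExtensionality.
From Coquelicot Require Import Coquelicot.
From mathcomp Require Import all_boot all_algebra.
From mathcomp Require Import Rstruct ring lra.

Set Implicit Arguments.
Unset Strict Implicit.
Unset Printing Implicit Defensive.
Import GRing.Theory Num.Theory.
Local Open Scope ring_scope.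

Lemma is_series_update (u v : nat -> R) (L : R) (m : nat) :
  is_series u L -> (forall k, k != m -> v k = u k) ->
  is_series v (L + (v m - u m)).
Proof.
elim: m u v L => [|m IHm] u v L hu hvu; apply: is_series_decr_1;
  rewrite /plus /Hierarchy.opp /= RplusE RoppE.
all: have hu1 : is_series (fun k => u k.+1) (L - u 0%N)
  by apply: is_series_incr_1; rewrite /plus /= RplusE subrK.
- rewrite (_ : _ + _ - _ = L - u 0%N); last by ring.
  by apply: is_series_ext hu1 => k; rewrite hvu.
- rewrite (_ : _ + _ - _ = L - u 0%N + (v m.+1 - u m.+1)); last by rewrite (hvu 0%N) //; ring.
  exact: IHm _ (fun k => v k.+1) _ hu1 (fun k => hvu k.+1).
Qed.

Lemma Series_updt (t : nat -> R) (n : nat) (lam s : R) : (0 < n)%N ->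
  ex_series (fun k => t k.+1 * lam ^+ k.+1) ->
  Series (fun k => updt t n s k.+1 * lam ^+ k.+1)
  = Series (fun k => t k.+1 * lam ^+ k.+1) + (s - t n) * lam ^+ n.
Proof.
move=> n_gt0 [L hL]; rewrite (is_series_unique _ _ hL); apply: is_series_unique.
have /= := @is_series_update _ (fun k => updt t n s k.+1 * lam ^+ k.+1) _ n.-1 hL.
rewrite prednK // /updt eqxx -mulrBl; apply=> k.
by case: (k.+1 =P n) => // <-; rewrite /= eqxx.
Qed.

Lemma updt_id (t : nat -> R) (n : nat) : updt t n (t n) = t.
Proof. by apply: functional_extensionality => m; rewrite /updt; case: eqP => // ->. Qed.

Lemma upda_id (l : nat) (a : 'I_l -> R) (n : 'I_l) : upda a n (a n) = a.
Proof. by apply: functional_extensionality => m; rewrite /upda; case: eqP => // ->. Qed.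

Definition is_log_derive (f : R -> R) (s k : R) : Prop := is_derive f s (k * f s).
(* Arguments of type [R] would otherwise be read in Stdlib's [R_scope]. *)
Arguments is_log_derive f%_function_scope s%_ring_scope k%_ring_scope.

Lemma is_log_derive_ext (f g : R -> R) (s k : R) :
  (forall y, f y = g y) -> is_log_derive f s k -> is_log_derive g s k.
Proof. by move=> fg; rewrite /is_log_derive -fg; apply: is_derive_ext. Qed.

Lemma is_log_derive_cst (c s : R) : is_log_derive (fun=> c) s 0.
Proof. by rewrite /is_log_derive mul0r; apply: is_derive_const. Qed.

Lemma is_log_derive_mul (f g : R -> R) (s kf kg : R) :
  is_log_derive f s kf -> is_log_derive g s kg ->
  is_log_derive (fun y => f y * g y) s (kf + kg).
Proof.
move=> hf hg; rewrite /is_log_derive.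
have -> : (kf + kg) * (f s * g s) = kf * f s * g s + f s * (kg * g s) by ring.
exact: is_derive_mult hf hg Rmult_comm.
Qed.

Lemma is_log_derive_exp (p : R -> R) (s dp : R) :
  is_derive p s dp -> is_log_derive (fun y => exp (p y)) s dp.
Proof. by move=> hp; apply: (is_derive_comp exp p) => //; apply: is_derive_exp. Qed.

Lemma is_log_derive_exp_affine (c k s : R) : is_log_derive (fun y => exp (c + y * k)) s k.
Proof.
apply: is_log_derive_exp.
rewrite -[k in is_derive _ _ k]add0r -[k in _ + k]mul1r.
exact: is_derive_plus (is_derive_const _ _) (is_derive_scal_l _ _ _ _ (is_derive_id _)).
Qed.

Lemma is_log_derive_Rpower_sub (lam g s : R) : s < lam ->
  is_log_derive (fun y => Rpower (lam - y) g) s (- g / (lam - s)).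
Proof.
move=> s_lt.
rewrite (_ : - g / (lam - s) = g * ((-1) * (lam - s)^-1)); last by ring.
apply: is_log_derive_exp.
apply: is_derive_scal; apply: (is_derive_comp ln (fun y => lam - y)).
  by apply: is_derive_ln; apply/RltP; rewrite R0E; lra.
rewrite -[X in is_derive _ _ X]add0r.
exact: is_derive_minus (is_derive_const _ _) (is_derive_id _).
Qed.

Lemma is_log_derive_prod_upda (l : nat) (a g : 'I_l -> R) (n : 'I_l) (lam : R) :
  a n < lam ->
  is_log_derive (fun s => \prod_(m < l) Rpower (lam - upda a n s m) (g m)) (a n)
    (- g n / (lam - a n)).
Proof.
move=> an_lt; rewrite -[X in is_log_derive _ _ X]add0r.
set P := \prod_(m < l | m != n) Rpower (lam - a m) (g m).
apply: (@is_log_derive_ext (fun s => P * Rpower (lam - s) (g n))) => [s|].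
  rewrite (bigD1 n) //= /upda eqxx mulrC; congr (_ * _).
  by apply: eq_bigr => m /negbTE ->.
by apply: is_log_derive_mul; [apply: is_log_derive_cst | apply: is_log_derive_Rpower_sub].
Qed.

Lemma mulmx2E (A B : M2) (i j : 'I_2) : (A * B) i j = A i 0 * B 0 j + A i 1 * B 1 j.
Proof.
rewrite !mxE big_ord_recl big_ord1.
by congr (A i _ * B _ j + A i _ * B _ j); apply: val_inj.
Qed.

Lemma mx_derive_ext (F G : R -> M2) (s : R) (M : M2) :
  (forall y, F y = G y) -> mx_derive F s M -> mx_derive G s M.
Proof. by move=> FG hF i j; apply: is_derive_ext (hF i j) => y; rewrite FG. Qed.

Lemma mx_derive_cst (A : M2) (s : R) : mx_derive (fun=> A) s 0.
Proof. by move=> i j; rewrite mxE; apply: is_derive_const. Qed.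

Lemma mx_derive_mul (F G : R -> M2) (s : R) (F' G' : M2) :
  mx_derive F s F' -> mx_derive G s G' ->
  mx_derive (fun y => F y * G y) s (F' * G s + F s * G').
Proof.
move=> hF hG i j.
apply: (is_derive_ext (fun y => F y i 0 * G y 0 j + F y i 1 * G y 1 j)) => [y|].
  by rewrite mulmx2E.
have -> : (F' * G s + F s * G') i j
    = (F' i 0 * G s 0 j + F s i 0 * G' 0 j) + (F' i 1 * G s 1 j + F s i 1 * G' 1 j).
  by rewrite mxE !mulmx2E; ring.
by apply: is_derive_plus; apply: is_derive_mult => //; apply: Rmult_comm.
Qed.

Lemma mx_derive_dressing (W P : R -> M2) (s : R) (W0 P0 B K : M2) :
  mx_derive W s (B * W0 - W0 * K) -> mx_derive P s (K * P0) ->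
  W s = W0 -> P s = P0 ->
  mx_derive (fun y => W y * P y) s (B * (W0 * P0)).
Proof.
move=> hW hP W0E P0E.
have <- : (B * W0 - W0 * K) * P0 + W0 * (K * P0) = B * (W0 * P0).
  by rewrite mulrBl -!mulrA subrK.
by rewrite -W0E -P0E in hW hP *; apply: mx_derive_mul.
Qed.

Lemma diag2P (d1 d2 : R) (A : M2) :
  A 0 0 = d1 -> A 1 1 = d2 -> A 0 1 = 0 -> A 1 0 = 0 -> diag2 d1 d2 = A.
Proof.
move=> h00 h11 h01 h10; apply/matrixP => i j; rewrite mxE.
have ord2 (k : 'I_2) : k = 0 \/ k = 1.
  by case: k => [[|[|//]] ?]; [left | right]; apply: val_inj.
by case: (ord2 i) => ->; case: (ord2 j) => ->.
Qed.

Lemma scale_diag2 (k d1 d2 : R) : k *: diag2 d1 d2 = diag2 (k * d1) (k * d2).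
Proof.
by apply/matrixP => i j; rewrite !mxE; case: (i == j); case: (i == 0 :> nat); rewrite ?mulr0.
Qed.

Lemma scale_sigma3 (k : R) : k *: sigma3 = diag2 k (- k).
Proof. by rewrite scale_diag2 !RealsE mulr1 mulrN1. Qed.

Lemma mul_diag2 (a1 a2 b1 b2 : R) : diag2 a1 a2 * diag2 b1 b2 = diag2 (a1 * b1) (a2 * b2).
Proof.
apply/matrixP => i j; rewrite mulmx2E !mxE.
by case: i j => [[|[|//]] ?] [[|[|//]] ?] /=; rewrite ?mulr0 ?mul0r ?addr0 ?add0r.
Qed.

Lemma mx_derive_diag2 (p q : R -> R) (s dp dq : R) :
  is_derive p s dp -> is_derive q s dq ->
  mx_derive (fun y => diag2 (p y) (q y)) s (diag2 dp dq).
Proof.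
move=> hp hq i j; rewrite mxE.
apply: (is_derive_ext (fun y => if i == j then (if i == 0 :> nat then p y else q y) else 0)).
  by move=> y; rewrite mxE.
by case: (i == j); [case: (i == 0 :> nat) | apply: is_derive_const].
Qed.

Lemma mx_derive_scaled_diag2 (f d1 d2 : R -> R) (s kf k1 k2 : R) (K : M2) :
  is_log_derive f s kf -> is_log_derive d1 s k1 -> is_log_derive d2 s k2 ->
  diag2 (kf + k1) (kf + k2) = K ->
  mx_derive (fun y => f y *: diag2 (d1 y) (d2 y)) s (K * (f s *: diag2 (d1 s) (d2 s))).
Proof.
move=> hf h1 h2 <-.
apply: (@mx_derive_ext (fun y => diag2 (f y * d1 y) (f y * d2 y))) => [y|].
  by rewrite scale_diag2.
by rewrite scale_diag2 mul_diag2; apply: mx_derive_diag2; apply: is_log_derive_mul.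
Qed.

Section Psi0Derivatives.

Variables (l : nat) (alpha beta aa bb : R) (gamma c : 'I_l -> R).
Variables (x : R) (t : nat -> R) (a : 'I_l -> R) (lam : R).

Local Notation psi0 := (Psi0 alpha beta aa bb gamma c).

Lemma Psi0_derive_x : mx_derive (fun y => psi0 y t a lam) x (lam%:M * psi0 x t a lam).
Proof.
apply: mx_derive_scaled_diag2.
- apply: is_log_derive_mul; first exact: is_log_derive_cst.
  apply: (@is_log_derive_ext (fun y => exp (0 + y * lam))) => [y|]; first by rewrite Rplus_0_l.
  exact: is_log_derive_exp_affine.
- exact: is_log_derive_cst.
- exact: is_log_derive_cst.
- by apply: diag2P; rewrite !mxE /= ?RealsE; ring.
Qed.

Lemma Psi0_derive_t (n : nat) : (0 < n)%N -> ex_series (fun k => t k.+1 * lam ^+ k.+1) ->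
  mx_derive (fun y => psi0 x (updt t n y) a lam) (t n) ((lam ^+ n *: sigma3) * psi0 x t a lam).
Proof.
move=> n_gt0 ht.
set xi := Series (fun k => t k.+1 * lam ^+ k.+1).
have xiE y : Series (fun k => updt t n y k.+1 * lam ^+ k.+1) = xi - t n * lam ^+ n + y * lam ^+ n.
  by rewrite Series_updt // -/xi; ring.
rewrite -[in X in mx_derive _ _ (_ * X)](updt_id t n); apply: mx_derive_scaled_diag2.
- exact: is_log_derive_cst.
- apply: is_log_derive_mul; first exact: is_log_derive_cst.
  apply: (@is_log_derive_ext (fun y => exp (xi - t n * lam ^+ n + y * lam ^+ n))) => [y|].
    by rewrite xiE.
  exact: is_log_derive_exp_affine.
- apply: is_log_derive_mul; first exact: is_log_derive_cst.
  apply: (@is_log_derive_ext (fun y => exp (- (xi - t n * lam ^+ n) + y * - lam ^+ n))) => [y|].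
    by rewrite xiE !RealsE; congr exp; ring.
  exact: is_log_derive_exp_affine.
- by rewrite scale_sigma3; apply: diag2P; rewrite !mxE /= ?RealsE; ring.
Qed.

Lemma Psi0_derive_a (n : 'I_l) : a n < lam ->
  mx_derive (fun y => psi0 x t (upda a n y) lam) (a n)
    (Sn (gamma n) (c n) (a n) lam * psi0 x t a lam).
Proof.
move=> an_lt.
have an_neq : lam - a n != 0 by rewrite lt0r_neq0 // subr_gt0.
rewrite -[in X in mx_derive _ _ (_ * X)](upda_id a n); apply: mx_derive_scaled_diag2.
1-3: apply: is_log_derive_mul; last exact: is_log_derive_cst.
1-3: apply: is_log_derive_mul; first exact: is_log_derive_cst.
1-3: exact: is_log_derive_prod_upda.
by rewrite /Sn scale_sigma3; apply: diag2P; rewrite !mxE /= ?RealsE; field.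
Qed.

End Psi0Derivatives.

Theorem theorem2p3 (l : nat) (hl : (1 <= l)%N) (alpha beta aa bb : R)
  (gamma c : 'I_l -> R)
  (w : nat -> (nat -> R) -> ('I_l -> R) -> M2)
  (Sato_t : forall (n : nat) (t : nat -> R) (a : 'I_l -> R) (lam : R),
     (1 <= n)%N -> dom a lam ->
     mx_derive (fun s => Wser (wAt w (updt t n s) a) lam) (t n)
       (Bn n (wAt w t a) lam * Wser (wAt w t a) lam
        - Wser (wAt w t a) lam * (lam ^+ n *: sigma3)))
  (Sato_a : forall (n : 'I_l) (t : nat -> R) (a : 'I_l -> R) (lam : R),
     dom a lam ->
     mx_derive (fun s => Wser (wAt w t (upda a n s)) lam) (a n)
       (Cn (gamma n) (c n) (a n) (wAt w t a) lam * Wser (wAt w t a) lam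
        - Wser (wAt w t a) lam * Sn (gamma n) (c n) (a n) lam)) :
  forall (x : R) (t : nat -> R) (a : 'I_l -> R) (lam : R),
    dom a lam -> ex_series (fun k => t k.+1 * lam ^+ k.+1) ->
    [/\ mx_derive (fun s => Psi alpha beta aa bb gamma c w s t a lam) x
          (lam *: Psi alpha beta aa bb gamma c w x t a lam),
        forall n : nat, (1 <= n)%N ->
          mx_derive (fun s => Psi alpha beta aa bb gamma c w x (updt t n s) a lam) (t n)
            (Bn n (wAt w t a) lam * Psi alpha beta aa bb gamma c w x t a lam)
      & forall n : 'I_l,
          mx_derive (fun s => Psi alpha beta aa bb gamma c w x t (upda a n s) lam) (a n)
            (Cn (gamma n) (c n) (a n) (wAt w t a) lam
             * Psi alpha beta aa bb gamma c w x t a lam)].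
Proof.
move=> x t a lam hdom ht; rewrite /Psi; split.
- rewrite -mul_scalar_mx mulmxE; apply: (mx_derive_dressing (K := lam%:M)) => //.
    by rewrite -!mulmxE scalar_mxC subrr; apply: mx_derive_cst.
  exact: Psi0_derive_x.
- move=> n n_gt0; apply: mx_derive_dressing (Sato_t n t a lam n_gt0 hdom) _ _ _.
  + exact: Psi0_derive_t.
  + by rewrite updt_id.
  + by rewrite updt_id.
- move=> n; apply: mx_derive_dressing (Sato_a n t a lam hdom) _ _ _.
  + apply: Psi0_derive_a; exact/RltP/(hdom.2 n).1.
  + by rewrite upda_id.
  + by rewrite upda_id.
Qed.
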